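(* Let $G$ be a connected graph with $\chi(G)=2$. If $P_\ell(G,2)\ge 1$, then $K_1\vee G$ is weakly enumeratively chromatic-choosable.
   Context: $K_1\vee G$ is the join: a new vertex adjacent to every vertex of $G$. For a list assignment $L$, $P(H,L)$ is the number of proper $L$-colorings of $H$; an $m$-assignment has all lists of size $m$; $P(H,m)$ is the chromatic polynomial, and the list color function $P_\ell(H,m)$ is the minimum of $P(H,L)$ over all $m$-assignments $L$. A graph $H$ is weakly enumeratively chromatic-choosable if $P_\ell(H,\chi(H))=P(H,\chi(H))$. *)

From mathcomp Require Import all_boot.
From Stdlib Require Import ClassicalEpsilon.
Set Implicit Arguments. Unset Strict Implicit. Unset Printing Implicit Defensive.

Section Graphs.
Variable T : finType.
Variable e : rel T.

Definition simple_graph := symmetric e /\ irreflexive e.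

Definition connected_graph := forall u v : T, connect e u v.

Definition chrom_poly (m : nat) : nat :=
  #|[set f : {ffun T -> 'I_m} | [forall u, forall v, e u v ==> (f u != f v)]]|.

(* chromatic number: least k admitting a proper k-colouring
   (for a loopless graph some k <= #|T| always works) *)
Definition chi : nat := find (fun k => 0 < chrom_poly k) (iota 0 #|T|.+1).

Definition m_assignment (m : nat) (L : T -> seq nat) :=
  forall v, uniq (L v) /\ size (L v) = m.

Definition col_bound (L : T -> seq nat) : nat := \max_(v : T) \max_(c <- L v) c.+1.

(* Colours are drawn from 'I_(col_bound L), which contains every colour of every list,
   so this counts exactly the proper L-colourings T -> nat. *)
Definition list_col_count (L : T -> seq nat) : nat :=
  #|[set f : {ffun T -> 'I_(col_bound L)} |
       [forall v, val (f v) \in L v] &&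
       [forall u, forall v, e u v ==> (f u != f v)]]|.

Definition attained (m n : nat) : bool :=
  if excluded_middle_informative
       (exists L : T -> seq nat, m_assignment m L /\ list_col_count L = n)
  then true else false.

Lemma attained_ex (m : nat) : exists n, attained m n.
Proof.
exists (list_col_count (fun _ => iota 0 m)).
rewrite /attained; case: excluded_middle_informative => // H; exfalso; apply: H.
exists (fun _ => iota 0 m); split => // v; by rewrite iota_uniq size_iota.
Qed.

Definition list_color_function (m : nat) : nat := ex_minn (attained_ex m).

End Graphs.

Definition join_K1 (T : finType) (e : rel T) : rel (option T) :=
  fun x y => match x, y with
             | Some u, Some v => e u v
             | None, Some _ | Some _, None => true
             | None, None => false
             end.

Definition weakly_enum_chrom_choosable (T : finType) (e : rel T) : Prop :=
  list_color_function e (chi e) = chrom_poly e (chi e).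

(* Write H for K_1 \/ G. A proper colouring of H with colours in {0,1,2} uses three
   distinct colours on the apex and the two ends of any edge of G, so along paths of the
   connected graph G it is determined by the colours of the apex and of one vertex:
   P(H,L) <= 6 for such lists, whence chi(H) = 3 and P(H,3) = 6 once every 3-assignment
   L of H is shown to admit 6 colourings. Colour the apex with x in L(apex) and G from
   the lists L(v) \ {x}, of size >= 2: 2-choosability gives one colouring, and a second
   one when x is missing from some L(v). If another colour y of the apex lies in every
   list, colour one side of the bipartition with y and the other side avoiding x and y:
   this gives 2 colourings, and 3 when x is missing from some L(v). So x contributes at
   least 1 + [x misses some list] + [another apex colour lies in every list], and these
   bounds sum to at least 6 over the three choices of x. *)

From mathcomp Require Import all_boot zify.
From Stdlib Require Import ClassicalEpsilon.
Set Implicit Arguments. Unset Strict Implicit. Unset Printing Implicit Defensive.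

Section ListColourings.
Variables (U : finType) (r : rel U).

Definition list_colourings (K : nat) (L : U -> seq nat) : {set {ffun U -> 'I_K}} :=
  [set f : {ffun U -> 'I_K} | [forall v, val (f v) \in L v] &&
                                [forall u, forall v, r u v ==> (f u != f v)]].

Definition is_list_colouring (L : U -> seq nat) (g : {ffun U -> nat}) : bool :=
  [forall v, g v \in L v] && [forall u, forall v, r u v ==> (g u != g v)].

Definition colourings_at_least (L : U -> seq nat) (n : nat) : Prop :=
  exists s, [/\ uniq s, all (is_list_colouring L) s & n <= size s].

Definition avoid (L : U -> seq nat) (x : nat) (v : U) : seq nat :=
  [seq c <- L v | c != x].

Lemma list_colouring_mem L g v : is_list_colouring L g -> g v \in L v.
Proof. by case/andP=> /forallP. Qed.

Lemma list_colouring_neq L g u v : is_list_colouring L g -> r u v -> g u != g v.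
Proof. by case/andP=> _ /forallP/(_ u)/forallP/(_ v)/implyP. Qed.

Lemma chrom_polyE k : chrom_poly r k = #|list_colourings k (fun=> iota 0 k)|.
Proof.
apply: eq_card => f; rewrite !inE /=.
suff -> : [forall v, val (f v) \in iota 0 k] by [].
by apply/forallP => v; rewrite mem_iota add0n ltn_ord.
Qed.

Lemma col_bound_gt (L : U -> seq nat) v c : c \in L v -> c < col_bound L.
Proof.
move=> cL; apply: leq_trans _ (leq_bigmax (F := fun v => \max_(c <- L v) c.+1) v).
by rewrite (big_rem c cL) leq_maxl.
Qed.

Lemma list_colouring_val K L f :
  f \in list_colourings K L -> is_list_colouring L [ffun v => val (f v)].
Proof.
rewrite inE => /andP[/forallP fL /forallP f_proper].
apply/andP; split; apply/forallP => u; rewrite ffunE; first exact: fL.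
by apply/forallP => v; rewrite ffunE (inj_eq val_inj); apply: (forallP (f_proper u)).
Qed.

Lemma colourings_at_least_le L m n :
  m <= n -> colourings_at_least L n -> colourings_at_least L m.
Proof. by move=> le_mn [s [s_uniq s_col n_le]]; exists s; rewrite (leq_trans le_mn). Qed.

Lemma card_list_colourings_geq K L n :
  0 < K -> (forall v c, c \in L v -> c < K) -> colourings_at_least L n ->
  n <= #|list_colourings K L|.
Proof.
case: K => // K _ LK [s [s_uniq s_col n_le]]; apply: leq_trans n_le _.
pose cut (g : {ffun U -> nat}) : {ffun U -> 'I_K.+1} := [ffun v => inord (g v)].
have cutK g v : is_list_colouring L g -> val (cut g v) = g v.
  by case/andP=> /forallP gL _; rewrite ffunE /= inordK //; apply: LK (gL v).
have cut_inj : {in s &, injective cut}.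
  move=> g1 g2 /(allP s_col) g1c /(allP s_col) g2c eq_cut; apply/ffunP => v.
  by rewrite -(cutK g1 v g1c) -(cutK g2 v g2c) eq_cut.
rewrite -(size_map cut) cardE; apply: uniq_leq_size; first by rewrite map_inj_in_uniq.
move=> _ /mapP[g /(allP s_col) gc ->]; rewrite mem_enum inE.
case/andP: (gc) => /forallP gL /forallP g_proper.
apply/andP; split; apply/forallP => u; first by rewrite cutK.
apply/forallP => v; apply/implyP => ruv.
by rewrite -(inj_eq val_inj) !cutK // (implyP (forallP (g_proper u) v)).
Qed.

Lemma size_avoid L x v : uniq (L v) -> size (avoid L x v) = size (L v) - (x \in L v).
Proof.
move=> uL; rewrite size_filter -(count_predC (pred1 x)) -(count_uniq_mem x uL).
by rewrite addKn; apply: eq_count.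
Qed.

End ListColourings.

Section ListColourFunction.
Variables (T : finType) (e : rel T).

Lemma list_color_function_le m L :
  m_assignment m L -> list_color_function e m <= #|list_colourings e (col_bound L) L|.
Proof.
rewrite /list_color_function; case: ex_minnP => n _ n_min mL; apply: n_min.
by rewrite /attained; case: excluded_middle_informative => // -[]; exists L.
Qed.

Lemma list_color_function_attained m : exists2 L, m_assignment m L &
  #|list_colourings e (col_bound L) L| = list_color_function e m.
Proof.
rewrite /list_color_function; case: ex_minnP => n; rewrite /attained.
by case: excluded_middle_informative => // -[L [mL Ln]] _ _; exists L.
Qed.

End ListColourFunction.

Section ChromaticNumber.
Variables (T : finType) (e : rel T).

Lemma chrom_poly_card_gt0 : irreflexive e -> 0 < chrom_poly e #|T|.
Proof.
move=> e_irr; apply/card_gt0P; exists [ffun v => enum_rank v]; rewrite inE.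
apply/forallP => u; apply/forallP => v; apply/implyP => euv; rewrite !ffunE.
rewrite (inj_eq enum_rank_inj); by apply: contraTneq euv => ->; rewrite e_irr.
Qed.

Lemma chrom_poly_lt_chi j : j < chi e -> chrom_poly e j = 0.
Proof.
move=> lt_j; have := before_find 0 lt_j.
have j_lt : j < #|T|.+1.
  by apply: leq_trans lt_j _; rewrite -(size_iota 0 #|T|.+1) find_size.
by rewrite nth_iota // add0n => /negbT; rewrite -eqn0Ngt => /eqP.
Qed.

Lemma chrom_poly_chi_gt0 : irreflexive e -> 0 < chrom_poly e (chi e).
Proof.
move=> e_irr.
have has_col : has (fun k => 0 < chrom_poly e k) (iota 0 #|T|.+1).
  by apply/hasP; exists #|T|; rewrite ?mem_iota ?add0n ?ltnSn ?chrom_poly_card_gt0.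
have := nth_find 0 has_col; rewrite nth_iota ?add0n //.
by move: has_col; rewrite has_find size_iota.
Qed.

Lemma chiP k : irreflexive e -> 0 < chrom_poly e k ->
  (forall j, j < k -> chrom_poly e j = 0) -> chi e = k.
Proof.
move=> e_irr k_col below_k; case: (ltngtP (chi e) k) => // [lt_chi | gt_chi].
  by have := chrom_poly_chi_gt0 e_irr; rewrite below_k.
by rewrite chrom_poly_lt_chi in k_col.
Qed.

Lemma edge_of_chrom_poly1 : chrom_poly e 1 = 0 -> exists u v, e u v.
Proof.
move=> no_col; case: (boolP [exists u, exists v, e u v]).
  by case/existsP => u /existsP[v euv]; exists u, v.
move=> /existsPn no_edge; suff: 0 < chrom_poly e 1 by rewrite no_col.
apply/card_gt0P; exists [ffun=> ord0].
rewrite inE; apply/forallP => u; apply/forallP => v.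
by have /existsPn/(_ v) := no_edge u; rewrite implybE => ->.
Qed.

Lemma bipartition_of_chrom_poly2 :
  0 < chrom_poly e 2 -> exists side : T -> bool, forall u v, e u v -> side u != side v.
Proof.
case/card_gt0P => f; rewrite inE => /forallP f_proper.
exists (fun v => val (f v) == 0) => u v euv.
move: (implyP (forallP (f_proper u) v) euv); rewrite -(inj_eq val_inj).
by case: (f u) => [[|[|?]] ?]; case: (f v) => [[|[|?]] ?].
Qed.

Lemma chrom_poly_triangle a b c k :
  e a b -> e b c -> e a c -> k < 3 -> chrom_poly e k = 0.
Proof.
move=> eab ebc eac k_lt3; apply/eqP; rewrite cards_eq0; apply/eqP/setP => f.
rewrite !inE; apply/negbTE/negP => /forallP f_proper.
have ne x y : e x y -> f x <> f y :> nat.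
  by move=> exy /val_inj fxy; move: (implyP (forallP (f_proper x) y) exy); rewrite fxy eqxx.
have := ne _ _ eab; have := ne _ _ ebc; have := ne _ _ eac.
have := ltn_ord (f a); have := ltn_ord (f b); have := ltn_ord (f c); lia.
Qed.

End ChromaticNumber.

Section JoinColourings.
Variables (T : finType) (e : rel T).

Definition extend_colouring (x : nat) (g : {ffun T -> nat}) : {ffun option T -> nat} :=
  [ffun o => if o is Some v then g v else x].

Lemma extend_colouring_inj x : injective (extend_colouring x).
Proof. by move=> g1 g2 /ffunP g12; apply/ffunP => v; have := g12 (Some v); rewrite !ffunE. Qed.

Lemma extend_list_colouring LH x g : x \in LH None ->
  is_list_colouring e (avoid (fun v => LH (Some v)) x) g ->
  is_list_colouring (join_K1 e) LH (extend_colouring x g).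
Proof.
move=> xN /andP[/forallP gL /forallP g_proper].
have [gLH gx] : (forall v, g v \in LH (Some v)) /\ (forall v, g v != x).
  by split=> v; have := gL v; rewrite mem_filter => /andP[].
apply/andP; split; apply/forallP => [[v|]]; rewrite ffunE //.
apply/forallP => -[w|]; rewrite ffunE //=; first exact: (forallP (g_proper v) w).
by apply/forallP => -[w|]; rewrite ffunE //= eq_sym.
Qed.

Lemma join_colourings_at_least LH cs n : uniq cs -> {subset cs <= LH None} ->
  (forall x, x \in cs -> colourings_at_least e (avoid (fun v => LH (Some v)) x) (n x)) ->
  colourings_at_least (join_K1 e) LH (\sum_(x <- cs) n x).
Proof.
suff: uniq cs -> {subset cs <= LH None} ->
  (forall x, x \in cs -> colourings_at_least e (avoid (fun v => LH (Some v)) x) (n x)) ->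
  exists s, [/\ uniq s, all (is_list_colouring (join_K1 e) LH) s,
             all (fun f : {ffun option T -> nat} => f None \in cs) s &
             \sum_(x <- cs) n x <= size s].
  by move=> H cs_uniq cs_LH cs_col; have [s [? ? _ ?]] := H cs_uniq cs_LH cs_col; exists s.
elim: cs => [|x cs IH] /=; first by exists [::]; rewrite big_nil.
case/andP=> xNcs cs_uniq cs_LH cs_col.
have [|y y_cs|s [s_uniq s_col s_None n_le]] := IH cs_uniq.
- by move=> y y_cs; apply: cs_LH; rewrite inE y_cs orbT.
- by apply: cs_col; rewrite inE y_cs orbT.
have [sx [sx_uniq sx_col nx_le]] := cs_col x (mem_head x cs).
have ext_None g : extend_colouring x g None = x by rewrite ffunE.
exists (map (extend_colouring x) sx ++ s); split.
- rewrite cat_uniq (map_inj_uniq (@extend_colouring_inj x)) sx_uniq s_uniq andbT /=.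
  apply/hasPn => f /(allP s_None) f_cs; apply/mapP => -[g _ fg].
  by rewrite fg ext_None (negbTE xNcs) in f_cs.
- rewrite all_cat all_map s_col andbT; apply/allP => g /(allP sx_col) g_col /=.
  by apply: extend_list_colouring g_col; apply: cs_LH; apply: mem_head.
- rewrite all_cat all_map; apply/andP; split; apply/allP => f.
    by rewrite /= ext_None mem_head.
  by move/(allP s_None); rewrite inE => ->; rewrite orbT.
- by rewrite big_cons size_cat size_map leq_add.
Qed.

End JoinColourings.

Lemma six_le_sum_colour_bounds (A : pred nat) (cs : seq nat) : uniq cs -> size cs = 3 ->
  6 <= \sum_(x <- cs) (1 + ~~ A x + has A [seq y <- cs | y != x]).
Proof.
case: cs => [|a [|b [|c [|]]]] //=; rewrite !inE !negb_or => /and3P[/andP[ab ac] bc _] _.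
rewrite !big_cons big_nil /= !eqxx eq_sym ab eq_sym ac eq_sym bc /=.
by case: (A a); case: (A b); case: (A c).
Qed.

Section TwoChoosable.
Variables (T : finType) (e : rel T).
Hypothesis choosable2 : 0 < list_color_function e 2.

Lemma exists_list_colouring L :
  (forall v, uniq (L v) /\ 1 < size (L v)) -> exists g, is_list_colouring e L g.
Proof.
move=> L2; have M2 : m_assignment 2 (fun v => take 2 (L v)).
  by move=> v; have [L_uniq L_size] := L2 v; rewrite take_uniq // size_takel.
have /card_gt0P[f /list_colouring_val fM] := leq_trans choosable2 (list_color_function_le e M2).
exists [ffun v => val (f v)]; case/andP: fM => /forallP fM f_proper.
by apply/andP; split => //; apply/forallP => v; apply: mem_take (fM v).
Qed.

Lemma two_list_colourings L u :
  (forall v, uniq (L v) /\ 1 < size (L v)) -> 2 < size (L u) -> colourings_at_least e L 2.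
Proof.
move=> L2 Lu3; have [g1 g1_col] := exists_list_colouring L2.
have g1u : g1 u \in L u by case/andP: g1_col => /forallP.
pose L' v := if v == u then rem (g1 u) (L u) else L v.
have L'2 v : uniq (L' v) /\ 1 < size (L' v).
  rewrite /L'; case: (v == u); last exact: L2.
  by rewrite rem_uniq ?size_rem ?(proj1 (L2 u)) // -ltnS prednK // (ltn_trans _ Lu3).
have [g2 /andP[/forallP g2L' g2_proper]] := exists_list_colouring L'2.
have g2u : g2 u != g1 u.
  by have := g2L' u; rewrite /L' eqxx (mem_rem_uniq _ (proj1 (L2 u))) inE => /andP[].
exists [:: g1; g2]; split => //=; rewrite ?inE ?g1_col ?andbT /=.
  by apply: contraNneq g2u => ->.
apply/andP; split => //; apply/forallP => v.
by have := g2L' v; rewrite /L'; case: (v =P u) => [-> /mem_rem | //].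
Qed.

Variable side : T -> bool.
Hypothesis side_edge : forall u v, e u v -> side u != side v.

Section ThreeLists.
Variable L : T -> seq nat.
Hypothesis L3 : forall v, uniq (L v) /\ size (L v) = 3.

Definition in_all_lists (y : nat) : bool := [forall v, y \in L v].

Lemma size_avoid3 x v : size (avoid L x v) = 3 - (x \in L v).
Proof. by have [L_uniq L_size] := L3 v; rewrite size_avoid ?L_size. Qed.

Lemma avoid_uniq_size2 x v : uniq (avoid L x v) /\ 1 < size (avoid L x v).
Proof.
split; first by rewrite filter_uniq ?(proj1 (L3 v)).
by rewrite size_avoid3; case: (x \in L v).
Qed.

Lemma avoid_colourings_base x : colourings_at_least e (avoid L x) (1 + ~~ in_all_lists x).
Proof.
case: (boolP (in_all_lists x)) => [_ | /forallPn[u xNu]].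
  have [g g_col] := exists_list_colouring (avoid_uniq_size2 x).
  by exists [:: g]; rewrite /= g_col.
by apply: (two_list_colourings (u := u) (avoid_uniq_size2 x)); rewrite size_avoid3 (negbTE xNu).
Qed.

Section CommonColour.
Variables (x y : nat) (v0 : T).
Hypotheses (y_neq_x : y != x) (y_all : in_all_lists y).

Definition bicolouring (sd : bool) (p : T -> nat) : {ffun T -> nat} :=
  [ffun v => if side v == sd then y else p v].

Let spare := avoid (avoid L x) y.

Lemma size_spare v : size (spare v) = 2 - (x \in L v).
Proof.
rewrite size_avoid ?filter_uniq ?(proj1 (L3 v)) // size_avoid3 mem_filter y_neq_x.
by rewrite (forallP y_all v); case: (x \in L v).
Qed.

Lemma spare_neq c v : c \in spare v -> c != y.
Proof. by rewrite mem_filter => /andP[]. Qed.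

Lemma bicolouring_list_colouring sd p :
  (forall v, p v \in spare v) -> is_list_colouring e (avoid L x) (bicolouring sd p).
Proof.
move=> p_spare; apply/andP; split; apply/forallP => u; rewrite ffunE.
  case: (side u == sd); last by have := p_spare u; rewrite mem_filter => /andP[].
  by rewrite mem_filter y_neq_x (forallP y_all u).
apply/forallP => v; apply/implyP => euv; rewrite ffunE.
move: (side_edge euv) (spare_neq (p_spare u)) (spare_neq (p_spare v)).
by case: (side u); case: (side v); case: sd => //= _ puy pvy; rewrite // eq_sym.
Qed.

Lemma bicolouring_swap_neq sd p p' v :
  p v != y -> p' v != y -> bicolouring sd p != bicolouring (~~ sd) p'.
Proof.
move=> pvy p'vy; apply/eqP => /ffunP/(_ v); rewrite !ffunE.
by case: (side v); case: sd => /= pp'; rewrite ?pp' ?eqxx // -pp' eqxx in pvy p'vy.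
Qed.

Lemma bicolouring_neq sd p p' v :
  side v != sd -> p v != p' v -> bicolouring sd p != bicolouring sd p'.
Proof.
move=> side_v pp'; apply/eqP => /ffunP/(_ v); rewrite !ffunE.
by rewrite (negbTE side_v); apply/eqP.
Qed.

Lemma avoid_colourings_common : colourings_at_least e (avoid L x) (2 + ~~ in_all_lists x).
Proof.
pose pick v := nth 0 (spare v) 0.
have pick_spare v : pick v \in spare v.
  by apply: mem_nth; rewrite size_spare; case: (x \in L v).
have pick_y v := spare_neq (pick_spare v).
case: (boolP (in_all_lists x)) => [_ | /forallPn[u xNu]].
  exists [:: bicolouring true pick; bicolouring false pick]; split => //=.
    by rewrite inE andbT (bicolouring_swap_neq true (pick_y v0) (pick_y v0)).
  by rewrite !bicolouring_list_colouring.
have spare_u2 : 1 < size (spare u) by rewrite size_spare (negbTE xNu).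
pose p' v := if v == u then nth 0 (spare u) 1 else pick v.
have p'_spare v : p' v \in spare v.
  by rewrite /p'; case: (v =P u) => [-> | _]; [apply: mem_nth | apply: pick_spare].
have p'_y v := spare_neq (p'_spare v).
have side_u : side u != ~~ side u by case: (side u).
exists [:: bicolouring (~~ side u) pick; bicolouring (~~ side u) p';
           bicolouring (~~ ~~ side u) pick]; split => /=.
- rewrite !inE !negb_or !(bicolouring_swap_neq _ (pick_y u) (pick_y u)).
  rewrite (bicolouring_swap_neq _ (p'_y u) (pick_y u)) /= !andbT.
  apply: (bicolouring_neq side_u); rewrite /p' eqxx /pick nth_uniq ?(ltnW spare_u2) //.
  by rewrite /spare /avoid !filter_uniq ?(proj1 (L3 u)).
- by rewrite !bicolouring_list_colouring.
- by [].
Qed.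

End CommonColour.

Lemma avoid_colourings (v0 : T) x ys : x \notin ys ->
  colourings_at_least e (avoid L x) (1 + ~~ in_all_lists x + has in_all_lists ys).
Proof.
case: hasP => [[y y_ys y_all] xNys | _ _].
  have y_neq_x : y != x by apply: contraNneq xNys => <-.
  apply: colourings_at_least_le (avoid_colourings_common v0 y_neq_x y_all).
  by rewrite addn1 add1n.
by rewrite addn0; apply: avoid_colourings_base.
Qed.

End ThreeLists.

Lemma card_list_colourings_join_ge6 (v0 : T) K LH : m_assignment 3 LH ->
  (forall o c, c \in LH o -> c < K) -> 6 <= #|list_colourings (join_K1 e) K LH|.
Proof.
move=> LH3 LK; have [N_uniq N_size] := LH3 None.
have K_gt0 : 0 < K.
  case: (LH None) N_size (LK None) => // c cs _ /(_ c (mem_head c cs)).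
  exact: leq_ltn_trans.
pose A := in_all_lists (fun v => LH (Some v)).
apply: card_list_colourings_geq K_gt0 LK _.
apply: colourings_at_least_le (six_le_sum_colour_bounds A N_uniq N_size) _.
apply: join_colourings_at_least N_uniq (fun x => id) _ => x _.
apply: (avoid_colourings (fun v => LH3 (Some v)) v0).
by rewrite mem_filter eqxx.
Qed.

End TwoChoosable.

Lemma distinct_colours3_sum a b c : a < 3 -> b < 3 -> c < 3 ->
  a != b -> a != c -> b != c -> a + b + c = 3.
Proof. by case: a => [|[|[|]]] //; case: b => [|[|[|]]] //; case: c => [|[|[|]]]. Qed.

Section JoinUpperBound.
Variables (T : finType) (e : rel T) (r0 : T).
Hypothesis e_conn : connected_graph e.
Variable LH : option T -> seq nat.
Hypothesis LH_lt3 : forall o c, c \in LH o -> c < 3.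

Lemma join_list_colouring_determined g1 g2 :
  is_list_colouring (join_K1 e) LH g1 -> is_list_colouring (join_K1 e) LH g2 ->
  g1 None = g2 None -> g1 (Some r0) = g2 (Some r0) -> g1 = g2.
Proof.
move=> g1_col g2_col eqN eq_r0.
have lt3 g o : is_list_colouring (join_K1 e) LH g -> g o < 3.
  by move/(list_colouring_mem o); apply: LH_lt3.
have sum3 g u v : is_list_colouring (join_K1 e) LH g -> e u v ->
    g None + g (Some u) + g (Some v) = 3.
  move=> g_col euv; apply: distinct_colours3_sum; rewrite ?lt3 //;
    exact: (list_colouring_neq g_col).
have agree_closed : closed e [pred v | g1 (Some v) == g2 (Some v)].
  move=> u v euv; rewrite !inE.
  have := sum3 _ _ _ g1_col euv; have := sum3 _ _ _ g2_col euv.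
  by rewrite eqN => s2 s1; apply/eqP/eqP; lia.
apply/ffunP => -[v|] //; apply/eqP.
by have := closed_connect agree_closed (e_conn r0 v); rewrite !inE eq_r0 eqxx => <-.
Qed.

Lemma card_list_colourings_join_le6 K : #|list_colourings (join_K1 e) K LH| <= 6.
Proof.
pose key (f : {ffun option T -> 'I_K}) := (val (f None), val (f (Some r0))).
have key_inj : {in list_colourings (join_K1 e) K LH &, injective key}.
  move=> f1 f2 /list_colouring_val f1_col /list_colouring_val f2_col [eqN eq_r0].
  have := join_list_colouring_determined f1_col f2_col; rewrite !ffunE.
  move=> /(_ eqN eq_r0) /ffunP f12; apply/ffunP => o; apply: val_inj.
  by have := f12 o; rewrite !ffunE.
pose pairs := [seq p <- [seq (i, j) | i <- iota 0 3, j <- iota 0 3] | p.1 != p.2].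
apply: (@leq_trans (size pairs)) => //; rewrite cardE -(size_map key).
apply: uniq_leq_size.
  by rewrite map_inj_in_uniq ?enum_uniq // => f1 f2; rewrite !mem_enum; apply: key_inj.
move=> p /mapP[f]; rewrite mem_enum => /list_colouring_val f_col ->.
have := list_colouring_neq f_col (isT : join_K1 e None (Some r0)).
have := LH_lt3 (list_colouring_mem None f_col).
have := LH_lt3 (list_colouring_mem (Some r0) f_col).
rewrite !ffunE => lt_r0 lt_N neq; rewrite mem_filter neq.
by apply: allpairs_f; rewrite mem_iota.
Qed.

End JoinUpperBound.

Theorem proposition27 (T : finType) (e : rel T) :
  simple_graph e -> connected_graph e -> chi e = 2 ->
  1 <= list_color_function e 2 ->
  weakly_enum_chrom_choosable (join_K1 e).
Proof.
move=> [_ e_irr] e_conn chi2 choosable2.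
have [u [v euv]] : exists u v, e u v.
  by apply: edge_of_chrom_poly1; apply: chrom_poly_lt_chi; rewrite chi2.
have [side side_edge] : exists side : T -> bool, forall u v, e u v -> side u != side v.
  by apply: bipartition_of_chrom_poly2; rewrite -chi2 chrom_poly_chi_gt0.
have ge6 := card_list_colourings_join_ge6 choosable2 side_edge u.
have iota3 : m_assignment 3 (fun _ : option T => iota 0 3).
  by move=> o; rewrite iota_uniq size_iota.
have iota3_lt (o : option T) c : c \in iota 0 3 -> c < 3 by rewrite mem_iota.
have le6 K := card_list_colourings_join_le6 u e_conn iota3_lt K.
have chrom3 : chrom_poly (join_K1 e) 3 = 6.
  by rewrite chrom_polyE; apply/eqP; rewrite eqn_leq le6 ge6.
have chi3 : chi (join_K1 e) = 3.
  have join_irr : irreflexive (join_K1 e) by case=> //= w; apply: e_irr.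
  apply: chiP join_irr _ _ => [|j]; first by rewrite chrom3.
  exact: (chrom_poly_triangle (a := None) (b := Some u) (c := Some v)).
have lcf3 : list_color_function (join_K1 e) 3 = 6.
  apply/eqP; rewrite eqn_leq (leq_trans (list_color_function_le _ iota3)) ?le6 //=.
  have [L L3 <-] := list_color_function_attained (join_K1 e) 3.
  by apply: ge6 L3 _ => o c; apply: col_bound_gt.
by rewrite /weakly_enum_chrom_choosable chi3 lcf3 chrom3.
Qed.
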